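(* Let $n\ge 1$. As polynomials in the indeterminates $x$ and $y$ with coefficients in $\mathbb{Q}[\mathfrak{S}_n]$, \[\rho(x)\rho(y)=\rho(xy),\qquad \overline{\rho}(x)\overline{\rho}(y)=\overline{\rho}(xy),\qquad \overline{\rho}(x)\rho(y)=\overline{\rho}(xy),\qquad \rho(x)\overline{\rho}(y)=\rho(xy),\] where $\rho(x)=\sum_{\pi\in\mathfrak{S}_n}\Omega'(\pi;x/2)\,\pi$ and $\overline{\rho}(x)=\sum_{\pi\in\mathfrak{S}_n}\overline{\Omega}'(\pi;x/2)\,\pi$.
   Context: $\mathfrak{S}_n$ is the symmetric group on $[n]=\{1,\dots,n\}$, permutations are written as words $(\pi(1),\dots,\pi(n))$, and multiplication in the group algebra $\mathbb{Q}[\mathfrak{S}_n]$ is composition: $(\sigma\tau)(i)=\sigma(\tau(i))$. Let $Z$ be a finite totally ordered set each of whose elements is declared either ''plus-type'' or ''minus-type''. For $\pi\in\mathfrak{S}_n$ let $N(\pi;Z)$ be the number of sequences $(a_1,\dots,a_n)\in Z^n$ with $a_1\le a_2\le\dots\le a_n$ such that for every $s\in[n-1]$: if $\pi(s)<\pi(s+1)$ then $a_s<a_{s+1}$ or ($a_s=a_{s+1}$ and $a_s$ is plus-type); if $\pi(s)>\pi(s+1)$ then $a_s<a_{s+1}$ or ($a_s=a_{s+1}$ and $a_s$ is minus-type). For a positive integer $k$ define the enriched order polynomial $\Omega'(\pi;k)=N(\pi;Z)$ with $Z=\{\bar1<1<\bar2<2<\dots<\bar k<k\}$, and the exterior enriched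 order polynomial $\overline{\Omega}'(\pi;k)=N(\pi;Z)$ with $Z=\{0<\bar1<1<\bar2<2<\dots<\overline{k-1}<k-1<\bar k\}$; here the elements $0$ and $j$ are plus-type and the barred elements $\bar j$ are minus-type. Each of these is, as a function of the positive integer $k$, the restriction of a unique polynomial in $k$ with rational coefficients, denoted by the same symbol; this polynomial is evaluated at $x/2$ above. *)

From mathcomp Require Import all_boot all_order all_algebra all_fingroup.
Set Implicit Arguments. Unset Strict Implicit. Unset Printing Implicit Defensive.
Import GRing.Theory.
Local Open Scope ring_scope.

(* A finite totally ordered set Z of size m is modelled by 'I_m with its
   natural order; [plus z] says whether z is plus-type (else minus-type). *)

(* N(pi;Z): number of weakly increasing a : [n] -> Z satisfying the
   ascent/descent compatibility conditions.  Positions are 0-based. *)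
Definition Ncount (n m : nat) (plus : 'I_m -> bool) (pi : 'S_n) : nat :=
  #|[set a : {ffun 'I_n -> 'I_m} |
     [forall s : 'I_n, forall t : 'I_n, (nat_of_ord t == (nat_of_ord s).+1)%N ==>
       [&& (a s <= a t)%N,
           ((pi s < pi t)%N ==>
              ((a s < a t)%N || ((a s == a t) && plus (a s)))) &
           ((pi t < pi s)%N ==>
              ((a s < a t)%N || ((a s == a t) && ~~ plus (a s))))]]]|.

(* Z = {1bar < 1 < 2bar < 2 < ... < kbar < k}: index 2(j-1) is jbar (minus),
   index 2(j-1)+1 is j (plus). *)
Definition Omega' (n : nat) (pi : 'S_n) (k : nat) : nat :=
  Ncount (fun z : 'I_(2 * k) => odd z) pi.

(* Z = {0 < 1bar < 1 < ... < (k-1)bar < k-1 < kbar}: index 0 is 0 (plus),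
   index 2j-1 is jbar (minus), index 2j is j (plus). *)
Definition Omega'bar (n : nat) (pi : 'S_n) (k : nat) : nat :=
  Ncount (fun z : 'I_(2 * k) => ~~ odd z) pi.

Definition interpolates (P : {poly rat}) (f : nat -> nat) : Prop :=
  forall k : nat, (0 < k)%N -> P.[k%:R] = (f k)%:R.

(* Bivariate polynomials Q[x,y] as {poly {poly rat}}: x is the inner
   variable, y the outer one. *)
Definition xvar : {poly {poly rat}} := ('X)%:P.
Definition yvar : {poly {poly rat}} := 'X.
Definition half2 : {poly {poly rat}} := ((2%:R : rat)^-1)%:P%:P.

Definition ev2 (P : {poly rat}) (t : {poly {poly rat}}) : {poly {poly rat}} :=
  (map_poly (fun c : rat => c%:P%:P) P).[t].

(* Composition in S_n as in the paper: (sigma tau)(i) = sigma (tau i).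
   In MathComp, (tau * sigma)%g x = sigma (tau x). *)
Definition pcomp (n : nat) (sigma tau : 'S_n) : 'S_n := (tau * sigma)%g.

(* Coefficient of pi in (sum_s f s . s)(sum_t g t . t) in Q[x,y][S_n]. *)
Definition gprod_coef (n : nat) (f g : 'S_n -> {poly {poly rat}}) (pi : 'S_n)
  : {poly {poly rat}} :=
  \sum_(s : 'S_n) \sum_(t : 'S_n | pcomp s t == pi) f s * g t.

(* N(pi; Z) counts the words g : [n] -> Z whose standardization is pi, equal
   letters being ordered left to right when they are plus-type and right to left
   when they are minus-type.  For two such chains Z1 and Z2, let Z2 * Z1 be
   Z2 x Z1 ordered by the Z2-coordinate first and then by the Z1-coordinate,
   reversed inside the blocks of minus-type elements of Z2, an element being
   plus-type when its coordinates have the same type.  Reading the second word of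
   a pair through the standardization sigma of the first one is a bijection from
   pairs with standardizations (sigma, tau) onto the words over Z2 * Z1 with
   standardization sigma tau, hence
     sum_(sigma tau = pi) N(sigma; Z1) N(tau; Z2) = N(pi; Z2 * Z1).
   The alternating chains of lengths 2a and 2c multiply to the alternating chain
   of length 4ac that starts with the type of the first factor: at x = 2a and
   y = 2c this is each of the four identities, and both sides are polynomials.
   Polynomiality comes from the same product with Z2 = [k] of plus type, since
   N(tau; [k]) = binomial(k + asc tau, n). *)

From mathcomp Require Import all_boot all_order all_algebra all_fingroup.
From mathcomp Require Import zify.
Set Implicit Arguments. Unset Strict Implicit. Unset Printing Implicit Defensive.
Import GRing.Theory.

Lemma ltn_lex_mulD (n a1 a2 b1 b2 : nat) : b1 < n -> b2 < n ->
  (a1 * n + b1 < a2 * n + b2) = (a1 < a2) || (a1 == a2) && (b1 < b2).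
Proof.
move=> b1n b2n; case: (ltngtP a1 a2) => [lt12 | lt21 | ->]; last by rewrite ltn_add2l.
- by have := leq_mul2r n a1.+1 a2; rewrite lt12 orbT mulSn; lia.
- by have := leq_mul2r n a2.+1 a1; rewrite lt21 orbT mulSn; lia.
Qed.

Definition flip (n : nat) (b : bool) (i : 'I_n) : 'I_n := if b then i else rev_ord i.

Lemma flipK (n : nat) (b : bool) : involutive (@flip n b).
Proof. by case: b => i //=; rewrite /flip rev_ordK. Qed.

Lemma flip_lt (n : nat) (b : bool) (i j : 'I_n) :
  (flip b i < flip b j) = if b then i < j else j < i.
Proof. by case: b => //=; have := ltn_ord i; have := ltn_ord j; rewrite /=; lia. Qed.

Lemma ltn_lex_ord (m n : nat) (f : 'I_m -> 'I_n -> 'I_n) (x y : 'I_m) (i j : 'I_n) :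
  (x * n + f x i < y * n + f y j) = (x < y) || (x == y) && (f x i < f x j).
Proof.
rewrite ltn_lex_mulD //; have [-> | ne] := eqVneq x y; first by rewrite eqxx.
by case: eqP => // /ord_inj /eqP; rewrite (negbTE ne).
Qed.

Definition stepwise (n : nat) (R : 'I_n -> 'I_n -> bool) : bool :=
  [forall s : 'I_n, forall t : 'I_n, (nat_of_ord t == (nat_of_ord s).+1) ==> R s t].

Lemma stepwiseP (n : nat) (R : 'I_n -> 'I_n -> bool) :
  reflect (forall s t : 'I_n, nat_of_ord t = (nat_of_ord s).+1 -> R s t) (stepwise R).
Proof.
apply: (iffP forallP) => [H s t /eqP st | H s].
  by move/forallP/(_ t)/implyP: (H s); apply.
by apply/forallP => t; apply/implyP => /eqP; apply: H.
Qed.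

Lemma stepwise_trans (n : nat) (R : rel nat) (K : 'I_n -> nat) : transitive R ->
  stepwise (fun s t => R (K s) (K t)) -> forall u v : 'I_n, u < v -> R (K u) (K v).
Proof.
move=> trR /stepwiseP step u [v vn]; elim: v vn => [|v IH] vn //= uv.
have vn' : v < n by lia.
have last_step := step (Ordinal vn') (Ordinal vn) erefl.
move: uv; rewrite ltnS leq_eqVlt => /orP [/eqP uv | uv]; last exact: trR (IH vn' uv) last_step.
by rewrite (_ : u = Ordinal vn') //; apply: ord_inj.
Qed.

Lemma stepwise_ltn_ge_idx (n : nat) (K : 'I_n -> nat) :
  stepwise (fun s t => K s < K t) -> forall s : 'I_n, s <= K s.
Proof.
move=> /stepwiseP step [j jn] /=; elim: j jn => [|j IH] jn //.
have jn' : j < n by lia.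
by have := step (Ordinal jn') (Ordinal jn) erefl; have := IH jn'; rewrite /=; lia.
Qed.

Lemma stepwise_le_max (n : nat) (K : 'I_n.+1 -> nat) :
  stepwise (fun s t => K s <= K t) -> forall s, K s <= K ord_max.
Proof.
move=> step s; case: (ltngtP s (@ord_max n)) => [lt | | /ord_inj -> //].
  exact: (stepwise_trans leq_trans step lt).
by have := ltn_ord s; rewrite ltnNge => /negbTE ->.
Qed.

Lemma card_ord_ltn (n p : nat) : p <= n -> #|[set q : 'I_n | q < p]| = p.
Proof.
move=> le; rewrite -sum1_card.
under eq_bigl => q do rewrite inE.
by rewrite (big_ord_narrow le) sum1_card card_ord.
Qed.

Section Standardization.

Variables (n m : nat) (plus : 'I_m -> bool).
Implicit Types (g : {ffun 'I_n -> 'I_m}) (pi : 'S_n).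

Definition std_key g (i : 'I_n) : nat := g i * n + flip (plus (g i)) i.

Lemma std_key_lt g i j : (std_key g i < std_key g j) =
  (g i < g j) || (g i == g j) && (flip (plus (g i)) i < flip (plus (g i)) j).
Proof. exact: (ltn_lex_ord (fun x => flip (plus x))). Qed.

Lemma std_key_lt_flip g (b : bool) i j : i != j ->
  (flip b (g i) < flip b (g j))
    || (g i == g j) && (flip (plus (g i) == b) i < flip (plus (g i) == b) j)
  = if b then std_key g i < std_key g j else std_key g j < std_key g i.
Proof.
move=> ij; rewrite !std_key_lt !flip_lt [g j == _]eq_sym.
case: b; rewrite ?eqb_id ?eqbF_neg //.
case: (ltngtP (g i) (g j)) => [lt_ij | lt_ji | /ord_inj ->].
- by case: eqP lt_ij => // ->; rewrite ltnn.
- by case: eqP lt_ji => // ->; rewrite ltnn.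
rewrite eqxx /=; have : nat_of_ord i != j by [].
by case: (plus (g j)); case: ltngtP.
Qed.

Lemma std_key_inj g : injective (std_key g).
Proof.
move=> i j e; have n_gt0 : 0 < n := leq_ltn_trans (leq0n i) (ltn_ord i).
have := congr1 (divn^~ n) e; have := congr1 (modn^~ n) e.
rewrite /std_key !modnMDl !modn_small // !divnMDl // !divn_small // !addn0.
move=> fij /ord_inj gij; rewrite gij in fij.
by apply: (can_inj (flipK (plus (g j)))); apply: ord_inj.
Qed.

Lemma std_rank_subproof g i : #|[set j | std_key g j < std_key g i]| < n.
Proof.
rewrite -[n in _ < n]card_ord; apply: proper_card; apply/properP.
by split; [exact: subset_predT | exists i; rewrite ?inE ?ltnn].
Qed.

Definition std_rank g i : 'I_n := Ordinal (std_rank_subproof g i).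

Lemma std_rank_mono g i j : std_key g i < std_key g j -> std_rank g i < std_rank g j.
Proof.
move=> lt; apply: proper_card; apply/properP; split; last by exists i; rewrite !inE ?lt ?ltnn.
by apply/subsetP => x; rewrite !inE => /ltn_trans; apply.
Qed.

Lemma std_rank_inj g : injective (std_rank g).
Proof.
move=> i j e; apply: (@std_key_inj g).
case: (ltngtP (std_key g i) (std_key g j)) => [lt_ij | lt_ji | -> //].
  by have := std_rank_mono lt_ij; rewrite e ltnn.
by have := std_rank_mono lt_ji; rewrite e ltnn.
Qed.

(* [std g i] is the position of the [i]-th letter of [g] in the order of [std_key]. *)
Definition std g : 'S_n := (perm (@std_rank_inj g))^-1.

Definition std_spec g pi : bool :=
  [forall u : 'I_n, forall v : 'I_n, (u < v) ==> (std_key g (pi u) < std_key g (pi v))].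

Lemma std_specP g pi :
  reflect (forall u v : 'I_n, u < v -> std_key g (pi u) < std_key g (pi v)) (std_spec g pi).
Proof.
apply: (iffP forallP) => [H u v | H u]; first by move/forallP/(_ v)/implyP: (H u).
by apply/forallP => v; apply/implyP; apply: H.
Qed.

Lemma std_spec_std g : std_spec g (std g).
Proof.
have rank_std u : std_rank g (std g u) = u.
  by rewrite -[RHS](permKV (perm (@std_rank_inj g))) permE.
apply/std_specP => u v uv; set U := std g u; set V := std g v.
case: (ltngtP (std_key g U) (std_key g V)) => // [/std_rank_mono | /std_key_inj /perm_inj uv'].
  by rewrite !rank_std ltnNge (ltnW uv).
by move: uv; rewrite uv' ltnn.
Qed.

Lemma std_rank_spec g pi : std_spec g pi -> forall p, std_rank g (pi p) = p.
Proof.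
move=> /std_specP mono p; apply: ord_inj => /=.
have -> : [set j | std_key g j < std_key g (pi p)] = pi @: [set q : 'I_n | q < p].
  apply/setP => j; rewrite inE -[j](permKV pi) mem_imset ?inE; last exact: perm_inj.
  case: (ltngtP ((pi^-1)%g j) p) => [/mono -> // | /mono | /ord_inj ->]; last by rewrite ltnn.
  by move/ltnW; rewrite leqNgt => /negbTE.
by rewrite card_imset ?card_ord_ltn 1?ltnW //; exact: perm_inj.
Qed.

Lemma std_specE g pi : std_spec g pi = (std g == pi).
Proof.
apply/idP/eqP => [spec | <-]; last exact: std_spec_std.
apply/permP => p; apply: (@std_rank_inj g).
by rewrite (std_rank_spec spec) (std_rank_spec (std_spec_std g)).
Qed.

Lemma std_spec_stepwise g pi :
  std_spec g pi = stepwise (fun s t => std_key g (pi s) < std_key g (pi t)).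
Proof.
apply/std_specP/stepwiseP => [mono s t st | step u v]; first by apply: mono; rewrite st.
exact: (@stepwise_trans _ ltn (fun s => std_key g (pi s)) ltn_trans (introT (stepwiseP _) step)).
Qed.

Definition relabel pi (a : {ffun 'I_n -> 'I_m}) : {ffun 'I_n -> 'I_m} :=
  [ffun i => a ((pi^-1)%g i)].

Lemma relabel_inj pi : injective (relabel pi).
Proof.
move=> a b e; apply/ffunP => s.
by have := congr1 (fun f : {ffun _ -> _} => f (pi s)) e; rewrite !ffunE permK.
Qed.

Lemma compatible_std_key pi (a : {ffun 'I_n -> 'I_m}) (s t : 'I_n) : s != t ->
  [&& a s <= a t,
      (pi s < pi t) ==> ((a s < a t) || (a s == a t) && plus (a s)) &
      (pi t < pi s) ==> ((a s < a t) || (a s == a t) && ~~ plus (a s))]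
  = (std_key (relabel pi a) (pi s) < std_key (relabel pi a) (pi t)).
Proof.
move=> st; rewrite std_key_lt !ffunE !permK flip_lt.
case: (ltngtP (a s) (a t)) => [lt_st | lt_ts | /ord_inj <-]; rewrite ?eqxx //=.
- by rewrite !implybT.
- by case: eqP lt_ts => // ->; rewrite ltnn.
have : nat_of_ord (pi s) != pi t by rewrite (inj_eq val_inj) (inj_eq (@perm_inj _ pi)).
by case: (plus (a s)); case: ltngtP.
Qed.

Lemma Ncount_std pi : Ncount plus pi = #|[set g | std g == pi]|.
Proof.
rewrite -(card_preimset _ (@relabel_inj pi)); apply: eq_card => a.
rewrite !inE -std_specE std_spec_stepwise.
apply: eq_forallb => s; apply: eq_forallb => t.
case: eqP => //= st; rewrite compatible_std_key //.
by apply: contra_eq_neq st => ->; lia.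
Qed.

End Standardization.

Section SnakeOrder.

Variables (m1 m2 : nat) (plus2 : 'I_m2 -> bool).

Lemma snake_subproof (z1 : 'I_m1) (z2 : 'I_m2) : z2 * m1 + flip (plus2 z2) z1 < m2 * m1.
Proof. by have := ltn_ord (flip (plus2 z2) z1); have := ltn_ord z2; nia. Qed.

Definition snake (z1 : 'I_m1) (z2 : 'I_m2) : 'I_(m2 * m1) := Ordinal (snake_subproof z1 z2).

Lemma snake_lt (z1 w1 : 'I_m1) (z2 w2 : 'I_m2) : (snake z1 z2 < snake w1 w2) =
  (z2 < w2) || (z2 == w2) && (flip (plus2 z2) z1 < flip (plus2 z2) w1).
Proof. exact: (ltn_lex_ord (fun z => flip (plus2 z))). Qed.

Lemma snake_inj2 (z1 w1 : 'I_m1) (z2 : 'I_m2) : (snake z1 z2 == snake w1 z2) = (z1 == w1).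
Proof.
apply/eqP/eqP => [/(congr1 val) /= /addnI /ord_inj | -> //].
exact: (can_inj (flipK (plus2 z2))).
Qed.

Lemma snake_m1_gt0 (z : 'I_(m2 * m1)) : 0 < m1.
Proof. by have := ltn_ord z; nia. Qed.

Lemma snake_hi_subproof (z : 'I_(m2 * m1)) : z %/ m1 < m2.
Proof. by rewrite ltn_divLR ?(snake_m1_gt0 z). Qed.

Lemma snake_lo_subproof (z : 'I_(m2 * m1)) : z %% m1 < m1.
Proof. by rewrite ltn_pmod ?(snake_m1_gt0 z). Qed.

Definition snake_hi (z : 'I_(m2 * m1)) : 'I_m2 := Ordinal (snake_hi_subproof z).

Definition snake_lo (z : 'I_(m2 * m1)) : 'I_m1 :=
  flip (plus2 (snake_hi z)) (Ordinal (snake_lo_subproof z)).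

Lemma snake_hiK (z1 : 'I_m1) (z2 : 'I_m2) : snake_hi (snake z1 z2) = z2.
Proof.
by apply: ord_inj; rewrite /= divnMDl ?divn_small ?addn0 // (leq_ltn_trans _ (ltn_ord z1)).
Qed.

Lemma snake_loK (z1 : 'I_m1) (z2 : 'I_m2) : snake_lo (snake z1 z2) = z1.
Proof.
rewrite /snake_lo snake_hiK -[RHS](flipK (plus2 z2)); congr flip; apply: ord_inj => /=.
by rewrite modnMDl modn_small.
Qed.

Lemma snakeK (z : 'I_(m2 * m1)) : snake (snake_lo z) (snake_hi z) = z.
Proof. by apply: ord_inj; rewrite /= /snake_lo flipK /= -divn_eq. Qed.

End SnakeOrder.

Section Glue.

Variables (n m1 m2 : nat) (plus1 : 'I_m1 -> bool) (plus2 : 'I_m2 -> bool).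
Variable plus : 'I_(m2 * m1) -> bool.
Hypothesis plus_snake : forall z1 z2, plus (snake plus2 z1 z2) = (plus1 z1 == plus2 z2).

Local Notation word m := {ffun 'I_n -> 'I_m}.

Definition glue (x : word m1 * word m2) : word (m2 * m1) :=
  [ffun i => snake plus2 (x.1 i) (x.2 ((std plus1 x.1)^-1 i))%g].

Definition unglue (G : word (m2 * m1)) : word m1 * word m2 :=
  let g1 := [ffun i => snake_lo plus2 (G i)] in
  (g1, [ffun s => snake_hi (G (std plus1 g1 s))]).

Lemma glueK : cancel glue unglue.
Proof.
move=> [g1 g2]; have lo : [ffun i => snake_lo plus2 (glue (g1, g2) i)] = g1.
  by apply/ffunP => i; rewrite !ffunE snake_loK.
by rewrite /unglue lo; congr pair; apply/ffunP => s; rewrite !ffunE permK snake_hiK.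
Qed.

Lemma unglueK : cancel unglue glue.
Proof. by move=> G; apply/ffunP => i; rewrite !ffunE permKV snakeK. Qed.

Lemma std_glue x : std plus (glue x) = pcomp (std plus1 x.1) (std plus2 x.2).
Proof.
case: x => [g1 g2] /=; apply/eqP; rewrite -std_specE; apply/std_specP => u v uv.
have /std_specP key1 := std_spec_std plus1 g1.
have /std_specP /(_ u v uv) := std_spec_std plus2 g2.
set U := std plus2 g2 u; set V := std plus2 g2 v.
rewrite /pcomp !permM -/U -/V !std_key_lt !ffunE !permK snake_lt plus_snake /=.
have [E | ne] := eqVneq (g2 U) (g2 V); last by rewrite andFb orbF => ->.
have UV : std plus1 g1 U != std plus1 g1 V.
  by rewrite !(inj_eq (@perm_inj _ _)) neq_ltn uv.
rewrite E ltnn /= snake_inj2 std_key_lt_flip // flip_lt.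
by case: (plus2 (g2 V)) => /key1.
Qed.

End Glue.

Lemma sum_fibers (T J : finType) (f : T -> J) (F : J -> nat) :
  \sum_(x : T) F (f x) = \sum_(s : J) #|[set x | f x == s]| * F s.
Proof.
rewrite (partition_big f predT) //=; apply: eq_bigr => s _.
rewrite (eq_bigr (fun _ => F s)) => [|x /eqP -> //].
by rewrite sum_nat_const; congr (_ * _); apply: eq_card => x; rewrite !inE.
Qed.

Definition convn (n : nat) (f g : 'S_n -> nat) (pi : 'S_n) : nat :=
  \sum_(s : 'S_n) \sum_(t : 'S_n | pcomp s t == pi) f s * g t.

Lemma convn_Ncount_snake (n m1 m2 : nat) (plus1 : 'I_m1 -> bool) (plus2 : 'I_m2 -> bool)
    (plus : 'I_(m2 * m1) -> bool) :
  (forall z1 z2, plus (snake plus2 z1 z2) = (plus1 z1 == plus2 z2)) ->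
  forall pi : 'S_n, convn (Ncount plus1) (Ncount plus2) pi = Ncount plus pi.
Proof.
move=> plus_snake pi; rewrite Ncount_std -sum1dep_card.
rewrite (reindex (glue plus1 plus2)) /=; last first.
  by apply: onW_bij; exists (unglue plus1 plus2); [exact: glueK | exact: unglueK].
under eq_bigl => x do rewrite std_glue //.
rewrite big_mkcond -(pair_big xpredT xpredT (fun x1 x2 =>
  if pcomp (std plus1 x1) (std plus2 x2) == pi then 1 else 0)) /=.
under eq_bigr => x1 _ do
  rewrite (sum_fibers (std plus2) (fun t => if pcomp _ t == pi then 1 else 0)).
rewrite (sum_fibers (std plus1) (fun s => \sum_t _ * (if pcomp s t == pi then 1 else 0))).
apply: eq_bigr => s _; rewrite big_distrr big_mkcond /=; apply: eq_bigr => t _.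
by rewrite !Ncount_std; case: ifP; rewrite ?muln0 ?muln1.
Qed.

Lemma sorted_mktuple_stepwise (n M : nat) (c : {ffun 'I_n.+1 -> 'I_M}) :
  sorted ltn (map val (mktuple c)) = stepwise (fun s t => c s < c t).
Proof.
apply/(sortedP 0)/stepwiseP => [step s t st | step i]; last rewrite size_map size_tuple.
  have := step s; rewrite size_map size_tuple -st => /(_ (ltn_ord t)).
  rewrite !(nth_map (c ord0)) ?size_tuple //.
  by rewrite -(tnth_nth _ _ s) -(tnth_nth _ _ t) !tnth_mktuple.
move=> lt_i; have lt_i' : i < n.+1 by lia.
rewrite !(nth_map (c ord0)) ?size_tuple //.
rewrite -(tnth_nth _ _ (Ordinal lt_i')) -(tnth_nth _ _ (Ordinal lt_i)) !tnth_mktuple.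
exact: step.
Qed.

Lemma card_stepwise_ltn (n M : nat) :
  #|[set c : {ffun 'I_n.+1 -> 'I_M} | stepwise (fun s t => c s < c t)]| = 'C(M, n.+1).
Proof.
pose tuple_of (c : {ffun 'I_n.+1 -> 'I_M}) := mktuple c.
have tuple_of_inj : injective tuple_of.
  move=> c1 c2 e; apply/ffunP => i.
  by have := congr1 (fun t => tnth t i) e; rewrite !tnth_mktuple.
rewrite -card_ltn_sorted_tuples.
suff -> : [set t : n.+1.-tuple 'I_M | sorted ltn (map val t)]
    = tuple_of @: [set c : {ffun 'I_n.+1 -> 'I_M} | stepwise (fun s t => c s < c t)].
  by rewrite card_imset.
apply/setP => t; rewrite inE; apply/idP/imsetP => [sorted_t | [c]]; last first.
  by rewrite inE -sorted_mktuple_stepwise => ? ->.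
have graphK : mktuple [ffun i => tnth t i] = t.
  by apply: eq_from_tnth => i; rewrite tnth_mktuple ffunE.
exists [ffun i => tnth t i]; last by rewrite /tuple_of graphK.
by rewrite inE -sorted_mktuple_stepwise graphK.
Qed.

Definition rises_before (n : nat) (d : 'I_n -> bool) (s : 'I_n) : nat :=
  \sum_(r : 'I_n | r < s) ~~ d r.

Lemma rises_before_step (n : nat) (d : 'I_n -> bool) (s t : 'I_n) :
  nat_of_ord t = s.+1 -> rises_before d t = rises_before d s + ~~ d s.
Proof.
move=> ts; rewrite /rises_before (bigD1 s) /=; last by rewrite ts.
rewrite addnC; congr (_ + _); apply: eq_bigl => r.
by rewrite ts ltnS -val_eqE /=; case: ltngtP.
Qed.

Lemma rises_before_le (n : nat) (d : 'I_n -> bool) (s : 'I_n) : rises_before d s <= s.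
Proof.
rewrite -[X in _ <= X](card_ord_ltn (ltnW (ltn_ord s))) -sum1dep_card.
by apply: leq_sum => r _; case: (d r).
Qed.

Section RiseShift.

Variables (n k : nat) (d : 'I_n.+1 -> bool).

Local Notation E := (rises_before d).
Local Notation e := (rises_before d ord_max).

Lemma rise_shift_step (m : nat) (a : {ffun 'I_n.+1 -> 'I_m}) (s t : 'I_n.+1) :
  nat_of_ord t = s.+1 ->
  (a s + d s <= a t) = (a s + E s < a t + E t).
Proof. by move=> ts; rewrite (rises_before_step d ts); case: (d s) => /=; lia. Qed.

(* Adding the number of earlier rises makes the steps [a s + d s <= a t] strict. *)
Definition rise_shift (a : {ffun 'I_n.+1 -> 'I_k.+1}) : {ffun 'I_n.+1 -> 'I_(k + e).+1} :=
  [ffun s => inord (a s + E s)].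

Definition rise_unshift (c : {ffun 'I_n.+1 -> 'I_(k + e).+1}) : {ffun 'I_n.+1 -> 'I_k.+1} :=
  [ffun s => inord (c s - E s)].

Local Notation A := [set a : {ffun 'I_n.+1 -> 'I_k.+1} | stepwise (fun s t => a s + d s <= a t)].
Local Notation C := [set c : {ffun 'I_n.+1 -> 'I_(k + e).+1} | stepwise (fun s t => c s < c t)].

Lemma rise_shiftE a s : a \in A -> nat_of_ord (rise_shift a s) = a s + E s.
Proof.
rewrite inE => /stepwiseP step; rewrite ffunE inordK // ltnS.
have : a s + E s <= a ord_max + e.
  apply: (stepwise_le_max (K := fun s => a s + E s)); apply/stepwiseP => u v uv.
  by rewrite ltnW // -rise_shift_step // step.
by have := ltn_ord (a ord_max); rewrite ltnS => amax /leq_trans; apply; rewrite leq_add2r.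
Qed.

Lemma rises_before_le_stepwise c s : c \in C -> E s <= c s.
Proof.
by rewrite inE => step; apply: leq_trans (rises_before_le d s) (stepwise_ltn_ge_idx step s).
Qed.

Lemma rise_unshift_step c (s t : 'I_n.+1) :
  c \in C -> nat_of_ord t = s.+1 -> c s - E s + d s <= c t - E t.
Proof.
move=> cC ts; have := rises_before_le_stepwise s cC; move: cC; rewrite inE => /stepwiseP step.
have := step s t ts; rewrite (rises_before_step d ts).
by move: (nat_of_ord (c s)) (nat_of_ord (c t)) (E s) (d s) => x y z [] /=; lia.
Qed.

Lemma rise_unshiftE c s : c \in C -> nat_of_ord (rise_unshift c s) = c s - E s.
Proof.
move=> cC; rewrite ffunE inordK // ltnS.
have : c s - E s <= c ord_max - e.
  apply: (stepwise_le_max (K := fun s => c s - E s)); apply/stepwiseP => u v uv.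
  exact: leq_trans (leq_addr _ _) (rise_unshift_step cC uv).
have := ltn_ord (c ord_max); rewrite ltnS => cmax /leq_trans; apply.
by rewrite leq_subLR [_ + k]addnC.
Qed.

Lemma card_rise_shift : #|A| = 'C(k.+1 + e, n.+1).
Proof.
rewrite addSn -card_stepwise_ltn.
have shift_in a : a \in A -> rise_shift a \in C.
  move=> aA; have := aA; rewrite !inE => /stepwiseP step; apply/stepwiseP => s t ts.
  by rewrite !rise_shiftE // -rise_shift_step // step.
have unshift_in c : c \in C -> rise_unshift c \in A.
  move=> cC; rewrite inE; apply/stepwiseP => s t ts.
  by rewrite !rise_unshiftE //; apply: rise_unshift_step.
have shiftK : {in A, cancel rise_shift rise_unshift}.
  move=> a aA; apply/ffunP => s; apply: ord_inj.
  by rewrite rise_unshiftE ?shift_in // rise_shiftE // addnK.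
have unshiftK : {in C, cancel rise_unshift rise_shift}.
  move=> c cC; apply/ffunP => s; apply: ord_inj; rewrite rise_shiftE ?unshift_in //.
  by rewrite rise_unshiftE // subnK // rises_before_le_stepwise.
suff -> : C = rise_shift @: A by rewrite card_in_imset //; exact: can_in_inj shiftK.
apply/setP => c; apply/idP/imsetP => [cC | [a aA ->]]; last exact: shift_in.
by exists (rise_unshift c); rewrite ?unshift_in ?unshiftK.
Qed.

End RiseShift.

Lemma card_stepwise_rises (n k : nat) (d : 'I_n.+1 -> bool) :
  #|[set a : {ffun 'I_n.+1 -> 'I_k} | stepwise (fun s t => a s + d s <= a t)]|
  = 'C(k + rises_before d ord_max, n.+1).
Proof.
case: k => [|k]; last exact: card_rise_shift.
rewrite bin_small; last by have := rises_before_le d ord_max; rewrite /= add0n ltnS.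
by apply: eq_card0 => a; have := a ord0; case.
Qed.

Definition descent (n : nat) (tau : 'S_n) (s : 'I_n) : bool :=
  [exists t : 'I_n, (nat_of_ord t == s.+1) && (tau t < tau s)].

Lemma descentE (n : nat) (tau : 'S_n) (s t : 'I_n) :
  nat_of_ord t = s.+1 -> descent tau s = (tau t < tau s).
Proof.
move=> ts; apply/existsP/idP => [[t' /andP [/eqP t's]] | lt]; last by exists t; rewrite ts eqxx.
by have -> : t = t' by apply: ord_inj; rewrite ts t's.
Qed.

Lemma Ncount_all_plus (n k : nat) (tau : 'S_n) :
  Ncount (fun _ : 'I_k => true) tau
  = #|[set a : {ffun 'I_n -> 'I_k} | stepwise (fun s t => a s + descent tau s <= a t)]|.
Proof.
apply: eq_card => a; rewrite !inE; apply: eq_forallb => s; apply: eq_forallb => t.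
case: eqP => //= ts; rewrite (descentE tau ts) andbT andbF orbF.
case: (tau t < tau s); move: (a s) (a t) => x y /=.
all: case: (ltngtP x y) => [lt | lt | /ord_inj ->]; rewrite ?eqxx /= ?implybT ?implybF.
all: apply: esym; by [lia | apply/negbTE; rewrite -ltnNge; lia].
Qed.

Definition alt_plus (b : bool) (k : nat) (z : 'I_k) : bool := b (+) odd z.

Lemma odd_flip (a : nat) (p : bool) (z : 'I_(2 * a)) : odd (flip p z) = (p == odd z).
Proof.
case: p; rewrite /= ?eqb_id //.
by rewrite oddB ?oddM //= ltn_ord.
Qed.

Lemma Ncount_alt_plus_cast (n k k' : nat) (b : bool) (pi : 'S_n) :
  k = k' -> Ncount (@alt_plus b k) pi = Ncount (@alt_plus b k') pi.
Proof. by move->. Qed.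

Lemma convn_Ncount_alt_plus (n a m2 : nat) (b : bool) (plus2 : 'I_m2 -> bool) (pi : 'S_n) :
  convn (Ncount (@alt_plus b (2 * a))) (Ncount plus2) pi
  = Ncount (@alt_plus b (m2 * (2 * a))) pi.
Proof.
apply: convn_Ncount_snake => z1 z2; rewrite /alt_plus /= oddD !oddM /= andbF odd_flip.
by case: b (plus2 z2) (odd z1) => [] [] [].
Qed.

(* [Omega' pi] and [Omega'bar pi] are [Omega_alt false pi] and [Omega_alt true pi]
   by conversion. *)
Definition Omega_alt (b : bool) (n : nat) (pi : 'S_n) (k : nat) : nat :=
  Ncount (@alt_plus b (2 * k)) pi.

Lemma Omega_alt_mul (n a c : nat) (b1 b2 : bool) (pi : 'S_n) :
  convn (fun s => Omega_alt b1 s a) (fun t => Omega_alt b2 t c) pi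
  = Omega_alt b1 pi (a * (2 * c)).
Proof. by rewrite /Omega_alt convn_Ncount_alt_plus; apply: Ncount_alt_plus_cast; lia. Qed.

Lemma Omega_alt_all_plus (n k : nat) (b : bool) (pi : 'S_n) :
  Omega_alt b pi k = convn (fun s => Omega_alt b s 1) (Ncount (fun _ : 'I_k => true)) pi.
Proof. by rewrite /Omega_alt convn_Ncount_alt_plus; apply: Ncount_alt_plus_cast; lia. Qed.

Local Open Scope ring_scope.

Definition binpoly (R : numFieldType) (c n : nat) : {poly R} :=
  (n`!%:R)^-1 *: \prod_(i < n) ('X + (c%:R - i%:R)%:P).

Lemma binpolyE (R : numFieldType) (c n k : nat) : (binpoly R c n).[k%:R] = 'C(k + c, n)%:R.
Proof.
rewrite /binpoly hornerZ horner_prod.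
under eq_bigr do rewrite hornerD hornerX hornerC.
have -> : \prod_(i < n) ((k%:R : R) + (c%:R - i%:R)) = ((k + c) ^_ n)%:R.
  have [le | lt] := leqP n (k + c).
    rewrite ffact_prod natr_prod; apply: eq_bigr => i _.
    by rewrite natrB ?natrD ?addrA //; have := ltn_ord i; lia.
  by rewrite ffact_small // (bigD1 (Ordinal lt)) //= addrA -natrD subrr mul0r.
by rewrite -bin_ffact natrM mulrC mulfK // Num.Theory.pnatr_eq0 -lt0n fact_gt0.
Qed.

Lemma interpolates_all_plus (n : nat) (tau : 'S_n.+1) :
  exists B : {poly rat}, interpolates B (fun k => Ncount (fun _ : 'I_k => true) tau).
Proof.
exists (binpoly rat (rises_before (descent tau) ord_max) n.+1) => k _.
by rewrite binpolyE Ncount_all_plus card_stepwise_rises.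
Qed.

Lemma Omega_alt_interpolates (n : nat) (b : bool) (pi : 'S_n.+1) :
  exists P : {poly rat}, interpolates P (Omega_alt b pi).
Proof.
have [B HB] := fin_all_exists (fun t : 'S_n.+1 => interpolates_all_plus t).
exists (\sum_(s : 'S_n.+1) \sum_(t | pcomp s t == pi) (Omega_alt b s 1)%:R *: B t).
move=> k k_gt0; rewrite Omega_alt_all_plus natr_sum horner_sum; apply: eq_bigr => s _.
by rewrite natr_sum horner_sum; apply: eq_bigr => t _; rewrite hornerZ HB // natrM.
Qed.

Lemma poly_eq0_on_inj (R : idomainType) (p : {poly R}) (f : nat -> R) :
  injective f -> (forall i, p.[f i] = 0) -> p = 0.
Proof.
move=> f_inj p0; apply: (@roots_geq_poly_eq0 _ _ (map f (iota 0 (size p)))).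
- by apply/allP => _ /mapP [i _ ->]; apply/rootP.
- by rewrite map_inj_uniq ?iota_uniq.
by rewrite size_map size_iota.
Qed.

Definition eval2 (R : comNzRingType) (u v : R) : {poly {poly R}} -> R :=
  horner_eval v \o map_poly (horner_eval u).

Lemma eval2_sum (R : comNzRingType) (u v : R) (I : finType) (P : pred I)
    (F : I -> {poly {poly R}}) :
  eval2 u v (\sum_(i | P i) F i) = \sum_(i | P i) eval2 u v (F i).
Proof. exact: rmorph_sum. Qed.

Lemma eval2M (R : comNzRingType) (u v : R) : {morph eval2 u v : F G / F * G}.
Proof. exact: rmorphM. Qed.

Lemma poly2_eq_on_inj (R : idomainType) (F G : {poly {poly R}}) (f : nat -> R) :
  injective f -> (forall i j, eval2 (f i) (f j) F = eval2 (f i) (f j) G) -> F = G.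
Proof.
move=> f_inj FG; apply/eqP; rewrite -subr_eq0; apply/eqP/polyP => l; rewrite coef0.
apply: (poly_eq0_on_inj f_inj) => i; rewrite -horner_evalE -coef_map.
suff -> : map_poly (horner_eval (f i)) (F - G) = 0 by rewrite coef0.
apply: (poly_eq0_on_inj f_inj) => j; have := FG i j.
by rewrite /eval2 /= !horner_evalE raddfB hornerD hornerN => ->; rewrite subrr.
Qed.

Lemma eval2_ev2 (u v : rat) (P : {poly rat}) (t : {poly {poly rat}}) :
  eval2 u v (ev2 P t) = P.[eval2 u v t].
Proof.
rewrite /eval2 /ev2.
set f : {rmorphism {poly {poly rat}} -> rat} := horner_eval v \o map_poly (horner_eval u).
rewrite -/(f _) -/(f t) -horner_map /=; congr (_.[_]); apply/polyP => i.
rewrite coef_map coef_map_id0 /=; last by rewrite !polyC0.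
by rewrite map_polyC /= !horner_evalE !hornerC.
Qed.

Lemma eval2_half2 (u v : rat) : eval2 u v half2 = 2^-1.
Proof. by rewrite /eval2 /= map_polyC /= !horner_evalE !hornerC. Qed.

Lemma eval2_xvar (u v : rat) : eval2 u v xvar = u.
Proof. by rewrite /eval2 /= map_polyC /= !horner_evalE hornerX hornerC. Qed.

Lemma eval2_yvar (u v : rat) : eval2 u v yvar = v.
Proof. by rewrite /eval2 /= map_polyX /= horner_evalE hornerX. Qed.

Lemma half_double (a : nat) : 2^-1 * (2 * a)%:R = a%:R :> rat.
Proof. by rewrite natrM mulrA mulVf ?mul1r. Qed.

Lemma gprod_coef_Omega_alt (n : nat) (b1 b2 : bool) (P1 P2 : 'S_n -> {poly rat}) :
  (forall pi, interpolates (P1 pi) (Omega_alt b1 pi)) ->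
  (forall pi, interpolates (P2 pi) (Omega_alt b2 pi)) ->
  forall pi, gprod_coef (fun s => ev2 (P1 s) (half2 * xvar))
                        (fun t => ev2 (P2 t) (half2 * yvar)) pi
             = ev2 (P1 pi) (half2 * (xvar * yvar)).
Proof.
move=> HP1 HP2 pi; pose even i : rat := (2 * i.+1)%:R.
(* At x = 2(i+1) and y = 2(j+1) the two sides become those of [Omega_alt_mul]. *)
have even_inj : injective even by move=> i j /eqP; rewrite Num.Theory.eqr_nat => /eqP; lia.
apply: (poly2_eq_on_inj even_inj) => i j; rewrite /gprod_coef eval2_sum.
rewrite eval2_ev2 !eval2M eval2_half2 eval2_xvar eval2_yvar /even mulrA half_double -natrM.
rewrite HP1 ?muln_gt0 // -(Omega_alt_mul _ _ _ b2) natr_sum; apply: eq_bigr => s _.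
rewrite eval2_sum natr_sum; apply: eq_bigr => t _.
rewrite !(eval2M, eval2_ev2) eval2_half2 eval2_xvar eval2_yvar !half_double.
by rewrite HP1 // HP2 // natrM.
Qed.

Theorem theorem3p1 (n : nat) (hn : (1 <= n)%N) :
  (exists P : 'S_n -> {poly rat}, forall pi, interpolates (P pi) (Omega' pi)) /\
  (exists Q : 'S_n -> {poly rat}, forall pi, interpolates (Q pi) (Omega'bar pi)) /\
  forall P Q : 'S_n -> {poly rat},
    (forall pi, interpolates (P pi) (Omega' pi)) ->
    (forall pi, interpolates (Q pi) (Omega'bar pi)) ->
    forall pi : 'S_n,
      [/\ gprod_coef (fun s => ev2 (P s) (half2 * xvar))
                     (fun t => ev2 (P t) (half2 * yvar)) pi
            = ev2 (P pi) (half2 * (xvar * yvar)),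
          gprod_coef (fun s => ev2 (Q s) (half2 * xvar))
                     (fun t => ev2 (Q t) (half2 * yvar)) pi
            = ev2 (Q pi) (half2 * (xvar * yvar)),
          gprod_coef (fun s => ev2 (Q s) (half2 * xvar))
                     (fun t => ev2 (P t) (half2 * yvar)) pi
            = ev2 (Q pi) (half2 * (xvar * yvar)) &
          gprod_coef (fun s => ev2 (P s) (half2 * xvar))
                     (fun t => ev2 (Q t) (half2 * yvar)) pi
            = ev2 (P pi) (half2 * (xvar * yvar))].
Proof.
case: n hn => [// | n] _; split; [|split].
- have [P HP] := fin_all_exists (fun pi : 'S_n.+1 => Omega_alt_interpolates false pi).
  by exists P.
- have [Q HQ] := fin_all_exists (fun pi : 'S_n.+1 => Omega_alt_interpolates true pi).
  by exists Q.
move=> P Q HP HQ pi; split.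
- exact: (gprod_coef_Omega_alt (b1 := false) (b2 := false) HP HP).
- exact: (gprod_coef_Omega_alt (b1 := true) (b2 := true) HQ HQ).
- exact: (gprod_coef_Omega_alt (b1 := true) (b2 := false) HQ HP).
- exact: (gprod_coef_Omega_alt (b1 := false) (b2 := true) HP HQ).
Qed.
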